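(* Let $H=((0,100],(0,100],p_1,p_2)$ be the two-player game with $p_1(s_1,s_2)=s_1(100-s_1)$ if $s_1<s_2$, $=s_1(100-s_1)/2$ if $s_1=s_2$, $=0$ if $s_1>s_2$, and symmetrically $p_2(s_1,s_2)=s_2(100-s_2)$ if $s_2<s_1$, $=s_2(100-s_2)/2$ if $s_1=s_2$, $=0$ if $s_2>s_1$; take the pure belief structure. Then: (a) $\overline{LR}(H)=(\{50\},\{50\})$ and $(\{50\},\{50\})$ is a fixpoint of $\overline{LR}$, so the outcome of $\overline{LR}$ is $(\{50\},\{50\})$; (b) the operator $R$ defined by $R(H):=((0,50],(0,50])$ and $R(G):=\overline{LR}(G)$ for $G\neq H$ is a relaxation of $\overline{LR}$ whose outcome is $(\emptyset,\emptyset)$; hence $\overline{LR}$ is not order independent; (c) $\overline{GR}(H)=(\{50\},\{50\})$ and $\overline{GR}^2=(\emptyset,\emptyset)$, so the outcome of $\overline{GR}$ is $(\emptyset,\emptyset)$; (d) $LR^1=(\{50\},\{50\})$ while $LR^2$ contains the joint strategy $(49,49)$, so $LR^2\not\subseteq LR^1$.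
   Context: Restrictions of $H$ are pairs $(S_1,S_2)$ with $S_i\subseteq(0,100]$, ordered componentwise. Pure belief structure: beliefs of player $i$ in $G=(S_1,S_2)$ are the opponent's strategies in $S_{-i}$. $s_i\in BR_G(\mu_i)$ iff $p_i(s_i,\mu_i)\ge p_i(s_i',\mu_i)$ for all $s_i'\in S_i$. $GR(G)_i:=\{s_i\mid\exists\mu_i\in S_{-i}: s_i\in BR_H(\mu_i)\}$; $LR(G)_i:=\{s_i\mid\exists\mu_i\in S_{-i}: s_i\in BR_G(\mu_i)\}$; $\overline{T}(G):=T(G)\cap G$. Iterations: $T^0:=H$, $T^{\alpha+1}:=T(T^\alpha)$, $T^\beta:=\bigcap_{\alpha<\beta}T^\alpha$ for limit $\beta$; outcome = first iterate with $T^{\alpha+1}=T^\alpha$. $R$ is a relaxation of $T$ if for all ordinals $\alpha$: (1) $T(R^\alpha)\subseteq R(R^\alpha)$; (2) if $T(R^\alpha)\subseteq R^\alpha$ then $R(R^\alpha)\subseteq R^\alpha$; (3) if $R(R^\alpha)=R^\alpha$ then $T(R^\alpha)=R^\alpha$. $T$ is order independent if the set of outcomes of relaxations of $T$ has at most one element. *)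

From Stdlib Require Import Reals ClassicalDescription.
Open Scope R_scope.

Definition Restr : Type := ((R -> Prop) * (R -> Prop))%type.

Definition rsub (G G' : Restr) : Prop :=
  (forall x, fst G x -> fst G' x) /\ (forall x, snd G x -> snd G' x).
Definition rint (G G' : Restr) : Restr :=
  (fun x => fst G x /\ fst G' x, fun x => snd G x /\ snd G' x).

Definition Hstrat (x : R) : Prop := 0 < x <= 100.
Definition Hgame : Restr := (Hstrat, Hstrat).

Definition p1 (s1 s2 : R) : R :=
  if Rlt_dec s1 s2 then s1 * (100 - s1)
  else if Rlt_dec s2 s1 then 0
  else s1 * (100 - s1) / 2.

Definition p2 (s1 s2 : R) : R :=
  if Rlt_dec s2 s1 then s2 * (100 - s2)
  else if Rlt_dec s1 s2 then 0
  else s2 * (100 - s2) / 2.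

(** Best responses in a restriction with strategy sets S (pure beliefs).
    The responding strategy ranges over the strategies of H. *)
Definition BR1 (S1 : R -> Prop) (mu s1 : R) : Prop :=
  Hstrat s1 /\ forall s', S1 s' -> p1 s1 mu >= p1 s' mu.
Definition BR2 (S2 : R -> Prop) (mu s2 : R) : Prop :=
  Hstrat s2 /\ forall s', S2 s' -> p2 mu s2 >= p2 mu s'.

Definition GR (G : Restr) : Restr :=
  (fun s1 => exists mu, snd G mu /\ BR1 (fst Hgame) mu s1,
   fun s2 => exists mu, fst G mu /\ BR2 (snd Hgame) mu s2).
Definition LR (G : Restr) : Restr :=
  (fun s1 => exists mu, snd G mu /\ BR1 (fst G) mu s1,
   fun s2 => exists mu, fst G mu /\ BR2 (snd G) mu s2).

Definition bar (T : Restr -> Restr) (G : Restr) : Restr := rint (T G) G.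
Definition GRbar := bar GR.
Definition LRbar := bar LR.

(** Ordinals are represented by arbitrary
    well-orders (every ordinal is one, every well-order is isomorphic to
    an ordinal); an iteration of T along a well-order is a map f
    satisfying the transfinite recursion equations at every point. *)
Record wellorder := WO {
  wo_car :> Type;
  wo_lt : wo_car -> wo_car -> Prop;
  wo_wf : well_founded wo_lt;
  wo_trans : forall x y z, wo_lt x y -> wo_lt y z -> wo_lt x z;
  wo_total : forall x y, wo_lt x y \/ x = y \/ wo_lt y x
}.

Definition is_iteration (T : Restr -> Restr) (A : wellorder) (f : A -> Restr) : Prop :=
  forall a : A,
    ((forall b, ~ wo_lt A b a) -> f a = Hgame) /\
    (forall b, wo_lt A b a -> (forall c, wo_lt A c a -> wo_lt A c b \/ c = b) ->
       f a = T (f b)) /\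
    ((exists b, wo_lt A b a) ->
     (forall b, wo_lt A b a -> exists c, wo_lt A b c /\ wo_lt A c a) ->
       f a = (fun x => forall b, wo_lt A b a -> fst (f b) x,
              fun x => forall b, wo_lt A b a -> snd (f b) x)).

Definition outcome (T : Restr -> Restr) (G : Restr) : Prop :=
  exists (A : wellorder) (f : A -> Restr) (a : A),
    is_iteration T A f /\ T (f a) = f a /\ f a = G /\
    (forall b, wo_lt A b a -> T (f b) <> f b).

Definition relaxation (T Rop : Restr -> Restr) : Prop :=
  forall (A : wellorder) (f : A -> Restr), is_iteration Rop A f ->
  forall a : A,
    rsub (T (f a)) (Rop (f a)) /\
    (rsub (T (f a)) (f a) -> rsub (Rop (f a)) (f a)) /\
    (Rop (f a) = f a -> T (f a) = f a).

Definition order_independent (T : Restr -> Restr) : Prop :=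
  forall R1 R2 G1 G2, relaxation T R1 -> relaxation T R2 ->
    outcome R1 G1 -> outcome R2 G2 -> G1 = G2.

Definition s50 : Restr := (fun x => x = 50, fun x => x = 50).
Definition emptyR : Restr := (fun _ => False, fun _ => False).
Definition half50 : Restr := (fun x => 0 < x <= 50, fun x => 0 < x <= 50).

Definition Rop (G : Restr) : Restr :=
  if excluded_middle_informative (G = Hgame) then half50 else LRbar G.

(* The payoff s (100 - s) of the lower bid increases on (0, 50], and a tie only pays half of it.
   So against an opponent bid mu <= 50 one can always undercut: no bid is a best response
   as long as all bids just below mu remain available.  Against mu > 50 the unique best
   response in H is the monopoly bid 50.  Hence LR(H) = GR(H) = ({50}, {50}).  Inside
   ({50}, {50}) the bid 50 is a local best response to itself, so LR-bar stops there, while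
   GR compares with all of H, where undercutting 50 pays, and GR-bar empties.  A relaxation
   that first cuts H down to ((0,50], (0,50]) keeps undercutting available and also empties,
   which breaks order independence of LR-bar. *)

From Stdlib Require Import Reals Lra Lia Arith FunctionalExtensionality PropExtensionality
  ClassicalDescription.
Open Scope R_scope.

Lemma restr_ext (G G' : Restr) :
  (forall x, fst G x <-> fst G' x) -> (forall x, snd G x <-> snd G' x) -> G = G'.
Proof.
  destruct G as [G1 G2], G' as [G1' G2']; simpl; intros E1 E2.
  f_equal; apply functional_extensionality; intro x; apply propositional_extensionality; auto.
Qed.

Lemma restr_neq_fst (G G' : Restr) (x : R) : fst G x -> ~ fst G' x -> G <> G'.
Proof. intros hG hG' ->; contradiction. Qed.

Lemma p1_lt (s mu : R) : s < mu -> p1 s mu = s * (100 - s).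
Proof. intro h; unfold p1; destruct (Rlt_dec s mu); [reflexivity | lra]. Qed.

Lemma p1_eq (s : R) : p1 s s = s * (100 - s) / 2.
Proof. unfold p1; destruct (Rlt_dec s s); [lra | reflexivity]. Qed.

Lemma p1_gt (s mu : R) : mu < s -> p1 s mu = 0.
Proof.
  intro h; unfold p1.
  destruct (Rlt_dec s mu); [lra |]; destruct (Rlt_dec mu s); [reflexivity | lra].
Qed.

(* Since [p2 x y] unfolds to [p1 y x], [BR2 S] is convertible to [BR1 S]: every statement
   about player 1 below also serves for player 2. *)

Lemma BR1_undercut (S : R -> Prop) (mu s : R) :
  0 < mu <= 50 -> (forall x, 0 < x < mu -> S x) -> ~ BR1 S mu s.
Proof.
  intros hmu hS [hs best]; unfold Hstrat in hs.
  destruct (Rtotal_order s mu) as [lt | [-> | gt]].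
  - specialize (best ((s + mu) / 2) (hS ((s + mu) / 2) ltac:(lra))).
    rewrite (p1_lt s mu lt), (p1_lt ((s + mu) / 2) mu ltac:(lra)) in best; nra.
  - specialize (best (mu / 2) (hS (mu / 2) ltac:(lra))).
    rewrite p1_eq, (p1_lt (mu / 2) mu ltac:(lra)) in best; nra.
  - specialize (best (mu / 2) (hS (mu / 2) ltac:(lra))).
    rewrite (p1_gt s mu gt), (p1_lt (mu / 2) mu ltac:(lra)) in best; nra.
Qed.

Lemma monopoly_payoff_max (x : R) : x * (100 - x) <= 50 * (100 - 50).
Proof. pose proof (pow2_ge_0 (x - 50)); nra. Qed.

Lemma BR1_Hstrat_above50 (mu s : R) : 50 < mu <= 100 -> BR1 Hstrat mu s <-> s = 50.
Proof.
  intro hmu; split.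
  - intros [hs best]; unfold Hstrat in hs.
    specialize (best 50 ltac:(unfold Hstrat; lra)); rewrite (p1_lt 50 mu ltac:(lra)) in best.
    destruct (Rtotal_order s mu) as [lt | [-> | gt]].
    + rewrite (p1_lt s mu lt) in best; nra.
    + rewrite p1_eq in best; nra.
    + rewrite (p1_gt s mu gt) in best; lra.
  - intros ->; split; [unfold Hstrat; lra |]; intros s' hs'; unfold Hstrat in hs'.
    rewrite (p1_lt 50 mu ltac:(lra)).
    destruct (Rtotal_order s' mu) as [lt | [-> | gt]].
    + rewrite (p1_lt s' mu lt); apply Rle_ge, monopoly_payoff_max.
    + rewrite p1_eq; pose proof (monopoly_payoff_max mu); lra.
    + rewrite (p1_gt s' mu gt); lra.
Qed.

Lemma BR1_Hstrat (mu s : R) : Hstrat mu -> BR1 Hstrat mu s -> s = 50.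
Proof.
  intros hmu br; unfold Hstrat in hmu.
  destruct (Rle_lt_dec mu 50) as [le | gt].
  - exfalso; apply (BR1_undercut Hstrat mu s); [lra | | exact br].
    intros x hx; unfold Hstrat; lra.
  - exact (proj1 (BR1_Hstrat_above50 mu s ltac:(lra)) br).
Qed.

Lemma LR_Hgame : LR Hgame = s50.
Proof.
  assert (H50 : forall x, (exists mu, Hstrat mu /\ BR1 Hstrat mu x) <-> x = 50).
  { intro x; split.
    - intros [mu [hmu br]]; exact (BR1_Hstrat mu x hmu br).
    - intros ->; exists 100; split; [unfold Hstrat; lra |].
      apply BR1_Hstrat_above50; lra. }
  apply restr_ext; exact H50.
Qed.

Lemma LRbar_Hgame : LRbar Hgame = s50.
Proof.
  unfold LRbar, bar; rewrite LR_Hgame.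
  apply restr_ext; simpl; intro x; (split; [tauto | intros ->; unfold Hstrat; lra]).
Qed.

Lemma GRbar_Hgame : GRbar Hgame = s50.
Proof. exact LRbar_Hgame. Qed.

Lemma LRbar_s50 : LRbar s50 = s50.
Proof.
  assert (br : BR1 (fun x => x = 50) 50 50).
  { split; [unfold Hstrat; lra | intros s' ->; lra]. }
  apply restr_ext; simpl; intro x; (split; [tauto | intros ->; eauto]).
Qed.

Lemma LR_s50_49 : fst (LR s50) 49 /\ snd (LR s50) 49.
Proof.
  assert (br : BR1 (fun x => x = 50) 50 49).
  { split; [unfold Hstrat; lra | intros s' ->].
    rewrite (p1_lt 49 50 ltac:(lra)), p1_eq; lra. }
  split; exists 50; (split; [reflexivity | exact br]).
Qed.

Lemma GRbar_s50 : GRbar s50 = emptyR.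
Proof.
  apply restr_ext; simpl; intro x; split; try tauto;
    intros [[mu [-> br]] _]; revert br;
    (apply BR1_undercut; [lra | intros y hy; unfold Hstrat; lra]).
Qed.

Lemma LRbar_half50 : LRbar half50 = emptyR.
Proof.
  apply restr_ext; simpl; intro x; split; try tauto;
    intros [[mu [hmu br]] _]; revert br;
    (apply BR1_undercut; [exact hmu | intros y hy; lra]).
Qed.

Lemma LRbar_emptyR : LRbar emptyR = emptyR.
Proof. apply restr_ext; simpl; intro x; tauto. Qed.

Lemma GRbar_emptyR : GRbar emptyR = emptyR.
Proof. apply restr_ext; simpl; intro x; tauto. Qed.

Lemma s50_neq_Hgame : s50 <> Hgame.
Proof. apply not_eq_sym, (restr_neq_fst _ _ 100); simpl; unfold Hstrat; lra. Qed.

Lemma half50_neq_Hgame : half50 <> Hgame.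
Proof. apply not_eq_sym, (restr_neq_fst _ _ 100); simpl; unfold Hstrat; lra. Qed.

Lemma emptyR_neq_Hgame : emptyR <> Hgame.
Proof. apply not_eq_sym, (restr_neq_fst _ _ 100); simpl; unfold Hstrat; lra. Qed.

Lemma emptyR_neq_s50 : emptyR <> s50.
Proof. apply not_eq_sym, (restr_neq_fst _ _ 50); simpl; auto. Qed.

Lemma emptyR_neq_half50 : emptyR <> half50.
Proof. apply not_eq_sym, (restr_neq_fst _ _ 50); simpl; lra. Qed.

Lemma Rop_Hgame : Rop Hgame = half50.
Proof. unfold Rop; destruct (excluded_middle_informative (Hgame = Hgame)); tauto. Qed.

Lemma Rop_neq_Hgame (G : Restr) : G <> Hgame -> Rop G = LRbar G.
Proof. intro h; unfold Rop; destruct (excluded_middle_informative (G = Hgame)); tauto. Qed.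

Definition natWO : wellorder := WO nat lt lt_wf Nat.lt_trans Nat.lt_total.

Lemma iter_is_iteration (T : Restr -> Restr) :
  is_iteration T natWO (fun n => Nat.iter n T Hgame).
Proof.
  intro a; simpl; split; [| split].
  - intro minimal; destruct a as [| a]; [reflexivity |].
    exfalso; apply (minimal a); lia.
  - intros b hb pred; destruct (Nat.eq_dec a (S b)) as [-> | ne]; [reflexivity |].
    exfalso; destruct (pred (S b)) as [h | h]; lia.
  - intros [b hb] limit; exfalso.
    destruct (limit (a - 1)%nat ltac:(lia)) as [c hc]; lia.
Qed.

Lemma outcome_iter (T : Restr -> Restr) (n : nat) (G : Restr) :
  Nat.iter n T Hgame = G -> T G = G ->
  (forall k, (k < n)%nat -> T (Nat.iter k T Hgame) <> Nat.iter k T Hgame) ->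
  outcome T G.
Proof.
  intros reach fix_G earlier.
  exists natWO, (fun n => Nat.iter n T Hgame), n; simpl.
  rewrite reach; auto using iter_is_iteration.
Qed.

Lemma relaxation_pointwise (T Rop' : Restr -> Restr) :
  (forall G, rsub (T G) (Rop' G) /\
             (rsub (T G) G -> rsub (Rop' G) G) /\
             (Rop' G = G -> T G = G)) ->
  relaxation T Rop'.
Proof. intros hG A f _ a; apply hG. Qed.

Lemma relaxation_refl (T : Restr -> Restr) : relaxation T T.
Proof. apply relaxation_pointwise; intro G; split; [split |]; auto. Qed.

Lemma relaxation_LRbar_Rop : relaxation LRbar Rop.
Proof.
  apply relaxation_pointwise; intro G.
  destruct (excluded_middle_informative (G = Hgame)) as [-> | ne].
  - rewrite Rop_Hgame, LRbar_Hgame; split; [| split].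
    + split; simpl; intros x ->; lra.
    + intros _; split; simpl; intros x hx; unfold Hstrat; lra.
    + intro h; contradiction (half50_neq_Hgame h).
  - rewrite (Rop_neq_Hgame G ne); split; [split |]; auto.
Qed.

Lemma outcome_LRbar : outcome LRbar s50.
Proof.
  apply (outcome_iter _ 1); simpl; [exact LRbar_Hgame | exact LRbar_s50 |].
  intros k hk; replace k with 0%nat by lia; simpl.
  rewrite LRbar_Hgame; exact s50_neq_Hgame.
Qed.

Lemma outcome_Rop : outcome Rop emptyR.
Proof.
  apply (outcome_iter _ 2); simpl.
  - rewrite Rop_Hgame, (Rop_neq_Hgame _ half50_neq_Hgame); exact LRbar_half50.
  - rewrite (Rop_neq_Hgame _ emptyR_neq_Hgame); exact LRbar_emptyR.
  - intros k hk; destruct k as [| [| k]]; simpl; [| | lia]; rewrite Rop_Hgame.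
    + exact half50_neq_Hgame.
    + rewrite (Rop_neq_Hgame _ half50_neq_Hgame), LRbar_half50; exact emptyR_neq_half50.
Qed.

Lemma outcome_GRbar : outcome GRbar emptyR.
Proof.
  apply (outcome_iter _ 2); simpl.
  - rewrite GRbar_Hgame; exact GRbar_s50.
  - exact GRbar_emptyR.
  - intros k hk; destruct k as [| [| k]]; simpl; [| | lia]; rewrite GRbar_Hgame.
    + exact s50_neq_Hgame.
    + rewrite GRbar_s50; exact emptyR_neq_s50.
Qed.

Lemma not_order_independent_LRbar : ~ order_independent LRbar.
Proof.
  intro indep; apply emptyR_neq_s50, eq_sym.
  exact (indep LRbar Rop s50 emptyR (relaxation_refl _) relaxation_LRbar_Rop
           outcome_LRbar outcome_Rop).
Qed.

Theorem mainTheorem14 :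
  (* (a) *)
  (LRbar Hgame = s50 /\ LRbar s50 = s50 /\ outcome LRbar s50) /\
  (* (b) *)
  (relaxation LRbar Rop /\ outcome Rop emptyR /\ ~ order_independent LRbar) /\
  (* (c) *)
  (GRbar Hgame = s50 /\ GRbar (GRbar Hgame) = emptyR /\ outcome GRbar emptyR) /\
  (* (d) *)
  (LR Hgame = s50 /\ fst (LR (LR Hgame)) 49 /\ snd (LR (LR Hgame)) 49 /\
   ~ rsub (LR (LR Hgame)) (LR Hgame)).
Proof.
  rewrite GRbar_Hgame, LR_Hgame.
  destruct LR_s50_49 as [fst49 snd49].
  split; [| split; [| split]].
  - auto using LRbar_Hgame, LRbar_s50, outcome_LRbar.
  - auto using relaxation_LRbar_Rop, outcome_Rop, not_order_independent_LRbar.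
  - auto using GRbar_Hgame, GRbar_s50, outcome_GRbar.
  - repeat split; auto.
    intros [sub1 _]; specialize (sub1 49 fst49); simpl in sub1; lra.
Qed.
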